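(* Let $d,N\ge1$, let $L>C_{\mathcal U}$, and let $\Lambda_L^{(N)}(\mathbf x)$ and $\Lambda_L^{(N)}(\mathbf y)$ be two fully interactive $N$-particle cubes. If $d_S(\mathbf x,\mathbf y)\ge 8NL$, then $\Pi\Lambda_L^{(N)}(\mathbf x)$ and $\Pi\Lambda_L^{(N)}(\mathbf y)$ are disjoint subsets of $\mathbb Z^d$.
   Context: Points of $\mathbb Z^{Nd}$ are $\mathbf x=(x_1,\dots,x_N)$, $x_j\in\mathbb Z^d$; $d_S(\mathbf x,\mathbf y)=\min_{\pi\in S_N}\|\mathbf x-\pi\mathbf y\|_\infty$ with $\pi\mathbf y=(y_{\pi(1)},\dots,y_{\pi(N)})$; $\Lambda_L^{(N)}(\mathbf a)=\{\mathbf z\in\mathbb Z^{Nd}:d_S(\mathbf z,\mathbf a)\le L\}$. For $\Theta\subseteq\mathbb Z^{Nd}$, $\Pi\Theta=\bigcup_{n=1}^N\{z_n:\mathbf z\in\Theta\}\subseteq\mathbb Z^d$. Let $\mathcal U:\mathbb Z^d\to\mathbb R$ be a finitely supported interaction and $C_{\mathcal U}=\max_{u\in\operatorname{supp}\mathcal U}\|u\|+1$. A cube $\Lambda_L^{(N)}(\mathbf x)$ is partially interactive if there exist $1\le N_1,N_2<N$ with $N_1+N_2=N$ and disjoint $\mathcal S_1,\mathcal S_2\subseteq\mathbb Z^d$ with $\operatorname{dist}(\mathcal S_1,\mathcal S_2)\ge C_{\mathcal U}$ such that for all $\mathbf z\in\Lambda_L^{(N)}(\mathbf x)$: $\#\{j:z_j\in\mathcal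 S_1\}=N_1$ and $\#\{j:z_j\in\mathcal S_2\}=N_2$. It is fully interactive if it is not partially interactive. *)

From mathcomp Require Import all_boot all_order all_algebra all_fingroup.
Set Implicit Arguments. Unset Strict Implicit. Unset Printing Implicit Defensive.
Import Order.TTheory GRing.Theory Num.Theory.

Definition pt (d : nat) := {ffun 'I_d -> int}.
Definition cfg (N d : nat) := {ffun 'I_N -> pt d}.

Definition dist1 d (u v : pt d) : nat := \max_(k < d) absz (u k - v k).
Definition norm1 d (u : pt d) : nat := \max_(k < d) absz (u k).

Definition distinf N d (x y : cfg N d) : nat := \max_(j < N) dist1 (x j) (y j).

Definition permcfg N d (p : 'S_N) (y : cfg N d) : cfg N d := [ffun j => y (p j)].

(* symmetrized distance d_S(x,y) = min_pi ||x - pi y||_oo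
   (minimum over the nonempty finite set S_N; the seed is the value at pi = id) *)
Definition dS N d (x y : cfg N d) : nat :=
  \big[minn/distinf x y]_(p : 'S_N) distinf x (permcfg p y).

Definition cube (R : realFieldType) N d (L : R) (a : cfg N d) (z : cfg N d) : Prop :=
  ((dS z a)%:R <= L)%R.

Definition Pi N d (Theta : cfg N d -> Prop) (u : pt d) : Prop :=
  exists z, Theta z /\ exists n : 'I_N, z n = u.

(* C_U = max_{u in supp U} ||u|| + 1, where s enumerates supp U *)
Definition C_U d (s : seq (pt d)) : nat := (\max_(u <- s) norm1 u).+1.

Definition partially_interactive (R : realFieldType) N d (C : nat) (L : R)
  (x : cfg N d) : Prop :=
  exists N1 N2 : nat,
    [/\ 1 <= N1 < N, 1 <= N2 < N & N1 + N2 = N] /\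
    exists S1 S2 : pred (pt d),
      [/\ (forall u, ~~ (S1 u && S2 u)),
          (forall u v, S1 u -> S2 v -> C <= dist1 u v) &
          (forall z, cube L x z ->
             #|[set j : 'I_N | S1 (z j)]| = N1 /\ #|[set j : 'I_N | S2 (z j)]| = N2)].

Definition fully_interactive (R : realFieldType) N d (C : nat) (L : R)
  (x : cfg N d) : Prop := ~ partially_interactive C L x.

From mathcomp Require Import all_boot all_order all_algebra all_fingroup.
From mathcomp Require Import lra zify.
Import Order.TTheory GRing.Theory Num.Theory.

Set Implicit Arguments. Unset Strict Implicit. Unset Printing Implicit Defensive.

(* If the particles of the centre x of a cube split into two groups at mutual
   distance > 2L + C, the L-neighbourhoods of the two groups make the cube
   partially interactive.  So for a fully interactive cube the graph
   "dist (x_i, x_j) <= 2L + C" on the particles is connected, and a shortest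
   path bounds every dist (x_i, x_j) by (N - 1)(2L + C).  If the projections of
   two such cubes share a point u, some x_i and some y_j lie within L of u,
   whence ||x - y|| <= 2L + 2(N - 1)(2L + C) < 8NL as C < L. *)

Local Open Scope ring_scope.

Section Dist1.

Variable d : nat.
Implicit Types u v w : pt d.

Lemma dist1C u v : dist1 u v = dist1 v u.
Proof. by apply: eq_bigr => k _; rewrite -abszN opprB. Qed.

Lemma dist1xx u : dist1 u u = 0%N.
Proof. by apply: big1 => k _; rewrite subrr. Qed.

Lemma leq_dist1_triangle u v w : (dist1 u w <= dist1 u v + dist1 v w)%N.
Proof.
apply/bigmax_leqP => k _.
have tri : (absz (u k - w k) <= absz (u k - v k) + absz (v k - w k))%N.
  by rewrite -lez_nat PoszD !abszE ler_distD.
apply: leq_trans tri _.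
by apply: leq_add; apply: (leq_bigmax (F := fun k => absz (_ - _))).
Qed.

Lemma ler_dist1_triangle {R : numDomainType} u v w :
  (dist1 u w)%:R <= (dist1 u v)%:R + (dist1 v w)%:R :> R.
Proof. by rewrite -natrD ler_nat leq_dist1_triangle. Qed.

Lemma dist1_path (R : numDomainType) (T : Type) (f : T -> pt d) (D : R) a p :
  path [rel b c | (dist1 (f b) (f c))%:R <= D] a p ->
  (dist1 (f a) (f (last a p)))%:R <= (size p)%:R * D.
Proof.
elim: p a => [|b p IHp] a /=; first by rewrite dist1xx mul0r.
move=> /andP[Dab /IHp Db]; rewrite -add1n natrD mulrDl mul1r.
exact: le_trans (ler_dist1_triangle _ (f b) _) (lerD Dab Db).
Qed.

End Dist1.

Section SymmetrizedDistance.

Variables N d : nat.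
Implicit Types x y z : cfg N d.

Lemma leq_dist1_distinf x y j : (dist1 (x j) (y j) <= distinf x y)%N.
Proof. exact: (leq_bigmax (F := fun j => dist1 (x j) (y j))). Qed.

Lemma ler_distinf (R : numDomainType) x y (B : R) :
  0 <= B -> (forall j, (dist1 (x j) (y j))%:R <= B) -> (distinf x y)%:R <= B.
Proof.
move=> B0 xyB; apply: (big_ind (fun n : nat => n%:R <= B)) => // m n mB nB.
by rewrite /maxn; case: ifP.
Qed.

Lemma dS_le_distinf x y : (dS x y <= distinf x y)%N.
Proof.
apply: (big_rec (fun n => n <= distinf x y)%N) => // p n _.
exact: leq_trans (geq_minr _ _).
Qed.

Lemma dS_attained x y : exists p : 'S_N, dS x y = distinf x (permcfg p y).
Proof.
apply: (big_ind (fun n => exists p : 'S_N, n = distinf x (permcfg p y))).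
- by exists 1%g; congr distinf; apply/ffunP => j; rewrite ffunE perm1.
- by move=> m n [p ->] [q ->]; rewrite /minn; case: ifP => _; [exists p | exists q].
- by move=> p _; exists p.
Qed.

Lemma cube_matching (R : realFieldType) (L : R) x z :
  cube L x z -> exists p : 'S_N, forall j, (dist1 (z j) (x (p j)))%:R <= L.
Proof.
rewrite /cube; have [p ->] := dS_attained z x => zxL; exists p => j.
apply: le_trans zxL; rewrite ler_nat.
by have := leq_dist1_distinf z (permcfg p x) j; rewrite ffunE.
Qed.

End SymmetrizedDistance.

Section Interactivity.

Variables (R : realFieldType) (N d C : nat) (L : R) (x : cfg N d).

Lemma partially_interactive_of_gap (A : {set 'I_N}) :
  A != set0 -> A != setT ->
  (forall i j, i \in A -> j \notin A -> 2 * L + C%:R < (dist1 (x i) (x j))%:R) ->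
  partially_interactive C L x.
Proof.
move=> A0 AT gapA.
have cardA_gt0 : (0 < #|A|)%N by rewrite card_gt0.
have cardA_lt : (#|A| < N)%N.
  by have := @proper_card _ A setT; rewrite cardsT card_ord properT; apply.
have cardAC : (#|A| + #|~: A| = N)%N by rewrite cardsC card_ord.
pose near (B : {set 'I_N}) u := [exists i in B, (dist1 u (x i))%:R <= L].
have far u v : near A u -> near (~: A) v -> C%:R < (dist1 u v)%:R :> R.
  move=> /exists_inP[i iA uiL] /exists_inP[j jA vjL]; rewrite inE in jA.
  have := gapA i j iA jA; rewrite dist1C in uiL.
  have := ler_dist1_triangle (R := R) (x i) u (x j).
  have := ler_dist1_triangle (R := R) u v (x j).
  lra.
have not_near2 u : near A u -> near (~: A) u -> False.
  by move=> uA uAC; have := far u u uA uAC; rewrite dist1xx ltr_nat.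
exists #|A|, #|~: A|; split; first by split; lia.
exists (near A), (near (~: A)); split.
- by move=> u; apply/negP => /andP[]; apply: not_near2.
- by move=> u v uA vAC; apply: ltnW; rewrite -(ltr_nat R) far.
move=> z /cube_matching[p zpL].
have near_match (B : {set 'I_N}) j : p j \in B -> near B (z j).
  by move=> pjB; apply/exists_inP; exists (p j).
have -> : [set j | near A (z j)] = p @^-1: A.
  apply/setP => j; rewrite !inE; apply/idP/idP => [zA|]; last exact: near_match.
  by apply/negPn/negP => pjA; apply: not_near2 zA (near_match _ _ _); rewrite inE.
have -> : [set j | near (~: A) (z j)] = p @^-1: (~: A).
  apply/setP => j; rewrite !inE; apply/idP/idP => [zAC|pjA]; last first.
    by apply: near_match; rewrite inE.
  by apply/negP => pjA; apply: not_near2 (near_match _ _ pjA) zAC.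
by rewrite !card_preimset //; apply: perm_inj.
Qed.

Lemma fully_interactive_dist1 : 0 <= L -> fully_interactive C L x ->
  forall i j, (dist1 (x i) (x j))%:R <= N.-1%:R * (2 * L + C%:R).
Proof.
move=> L0 fullx i j.
pose e := [rel a b : 'I_N | (dist1 (x a) (x b))%:R <= 2 * L + C%:R].
have ij_connected : connect e i j.
  apply: contraT => ij; case: fullx.
  apply: (@partially_interactive_of_gap [set k | connect e i k]).
  - by apply/set0Pn; exists i; rewrite inE connect0.
  - by apply/eqP => /setP/(_ j); rewrite !inE (negbTE ij).
  - move=> a b; rewrite !inE => ia ib; rewrite ltNge; apply: contra ib => eab.
    exact: connect_trans ia (connect1 eab).
have [p ep ->] := connectP ij_connected.
case: (shortenP ep) => q eq uq _.
apply: le_trans (dist1_path eq) _.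
apply: ler_wpM2r; first by have := ler0n R C; lra.
have size_q : (size (i :: q) <= N)%N.
  by rewrite -(card_uniqP uq); apply: leq_trans (max_card _) _; rewrite card_ord.
have N_gt0 : (0 < N)%N by apply: leq_ltn_trans (ltn_ord i).
by rewrite ler_nat -ltnS prednK.
Qed.

End Interactivity.

Lemma distinf_le_of_Pi_cube_meet (R : realFieldType) N d C (L : R)
    (x y : cfg N d) (u : pt d) :
  0 <= L -> fully_interactive C L x -> fully_interactive C L y ->
  Pi (cube L x) u -> Pi (cube L y) u ->
  (distinf x y)%:R <= 2 * L + 2 * (N.-1%:R * (2 * L + C%:R)).
Proof.
move=> L0 fullx fully [z [xz [n <-]]] [w [yw [m wm]]].
have [p zpL] := cube_matching xz; have [q wqL] := cube_matching yw.
have diam_x := fully_interactive_dist1 L0 fullx.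
have diam_y := fully_interactive_dist1 L0 fully.
have D0 : 0 <= N.-1%:R * (2 * L + C%:R) :> R.
  by apply: mulr_ge0; [|have := ler0n R C; lra].
apply: ler_distinf => [|j]; first lra.
have xz_n := zpL n; rewrite dist1C in xz_n.
have zy_m := wqL m; rewrite wm in zy_m.
have := diam_x j (p n); have := diam_y (q m) j.
have := ler_dist1_triangle (R := R) (x j) (x (p n)) (y j).
have := ler_dist1_triangle (R := R) (x (p n)) (z n) (y j).
have := ler_dist1_triangle (R := R) (z n) (y (q m)) (y j).
lra.
Qed.

Theorem lemma3p5 (R : realFieldType) (d N : nat) (U : pt d -> R)
  (s : seq (pt d)) (hd : (0 < d)%N) (hN : (0 < N)%N)
  (hs : forall u, (u \in s) = (U u != 0%R))
  (L : R) (x y : cfg N d)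
  (hL : ((C_U s)%:R < L)%R)
  (hx : fully_interactive (C_U s) L x)
  (hy : fully_interactive (C_U s) L y)
  (hxy : ((8 * N)%:R * L <= (dS x y)%:R)%R) :
  forall u : pt d, ~ (Pi (cube L x) u /\ Pi (cube L y) u).
Proof.
(* [U], [hs] and [hd] only fix the constant [C_U s]; all that is used of it is [C_U s < L]. *)
move=> u [xu yu].
have L_gt0 : 0 < L by have := ler0n R (C_U s); lra.
have xy_near := distinf_le_of_Pi_cube_meet (ltW L_gt0) hx hy xu yu.
have dS_le : (dS x y)%:R <= (distinf x y)%:R :> R by rewrite ler_nat dS_le_distinf.
have N_eq : (8 * N)%:R = 8 * (N.-1%:R + 1) :> R by rewrite natrM natr1 prednK.
have KC_le : N.-1%:R * (C_U s)%:R <= N.-1%:R * L :> R.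
  by rewrite ler_wpM2l // ltW.
rewrite N_eq in hxy; nra.
Qed.
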